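(* Let $S$ be a square-free semigroup, $D$ a division ring, and $(\alpha,\xi),(\beta,\zeta)\in Z^2(S,D^* )$. Then $D^{\beta}_{\zeta}S\cong D^{\alpha}_{\xi}S$ as rings if and only if there exists $\phi\in\mathrm{Aut}(S)$ such that $[\alpha^{\phi},\xi^{\phi}]=[\beta,\zeta]$ in the thin 2-cohomology.
   Context: $D$ is a division ring, $D^*$ its group of units, $\mathrm{Aut}(D)$ its group of ring automorphisms, $\rho_d(x)=dxd^{-1}$ for $d\in D^*$. A square-free semigroup is a semigroup $S$ (product $s\cdot t$) with zero $\theta$ and a finite set $E\subseteq S$ of nonzero pairwise orthogonal idempotents with $S=\bigcup_{e,f\in E}e\cdot S\cdot f$ and $|e\cdot S\cdot f\setminus\{\theta\}|\le 1$ for all $e,f\in E$; $S^*=S\setminus\{\theta\}$, and each $s\in S^*$ equals $e\cdot s\cdot f$ for unique $e,f\in E$. $\mathrm{Aut}(S)$ is the group of semigroup automorphisms. $S^{<0>}=E$, $S^{<n>}=\{(s_1,\dots,s_n)\in S^n:s_1\cdots s_n\ne\theta\}$, $F^n(S,G)$ is the group of functions $S^{<n>}\to G$; write $\alpha_s=\alpha(s)$, $\mu_e=\mu(e)$. A 2-cocycle is $(\alpha,\xi)\in F^1(S,\mathrm{Aut}(D))\times F^2(S,D^* )$ with $\alpha_s(\xi(t,u))\xi(s,t\cdot u)=\xi(s,t)\xi(s\cdot t,u)$ for $(s,t,u)\in S^{<3>}$ and $\alpha_s\circ\alpha_t=\rho_{\xi(s,t)}\circ\alpha_{s\cdot t}$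 for $(s,t)\in S^{<2>}$; $Z^2(S,D^* )$ is their set. $F^0(S,\mathrm{Aut}(D))\ltimes F^1(S,D^* )$ acts on $Z^2(S,D^* )$ by $(\mu,\eta)*(\alpha,\xi)=(\beta,\zeta)$ where for $s=e\cdot s\cdot f$, $t=f\cdot t\cdot g$ with $s\cdot t\ne\theta$: $\mu_e\circ\beta_s\circ\mu_f^{-1}=\rho_{\eta(s)}\circ\alpha_s$ and $\mu_e(\zeta(s,t))=\eta(s)\alpha_s(\eta(t))\xi(s,t)\eta(s\cdot t)^{-1}$. The orbits form the thin 2-cohomology, $[\alpha,\xi]$ denoting the orbit. For $\phi\in\mathrm{Aut}(S)$, $\alpha^{\phi}_s=\alpha_{\phi(s)}$, $\xi^{\phi}(s,t)=\xi(\phi(s),\phi(t))$. $D^{\alpha}_{\xi}S$ is the ring which is the left $D$-vector space with basis $S^*$ and multiplication extended by distributivity from $(d_1s)(d_2t)=d_1\alpha_s(d_2)\xi(s,t)\,(s\cdot t)$ if $s\cdot t\ne\theta$ and $0$ otherwise. *)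

From mathcomp Require Import all_boot all_order all_algebra.
Set Implicit Arguments. Unset Strict Implicit. Unset Printing Implicit Defensive.
Import GRing.Theory.
Local Open Scope ring_scope.

Definition division_ring (D : unitRingType) : Prop :=
  forall x : D, x != 0 -> x \is a GRing.unit.

Definition ring_aut (D : unitRingType) (f : D -> D) : Prop :=
  [/\ f 1 = 1, (forall x y, f (x + y) = f x + f y),
      (forall x y, f (x * y) = f x * f y) & bijective f].

Section SqFree.
Variables (S : finType) (mul : S -> S -> S) (th : S) (E : {set S}).

Definition square_free : Prop :=
  (forall s t u, mul (mul s t) u = mul s (mul t u)) /\
  (forall s, mul th s = th /\ mul s th = th) /\
  (forall e, e \in E -> e != th /\ mul e e = e) /\
  (forall e f, e \in E -> f \in E -> e != f -> mul e f = th) /\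
  (forall s, exists e f u, [/\ e \in E, f \in E & s = mul (mul e u) f]) /\
      (forall e f u v, e \in E -> f \in E ->
          mul (mul e u) f != th -> mul (mul e v) f != th ->
          mul (mul e u) f = mul (mul e v) f).

Definition semigroup_aut (phi : S -> S) : Prop :=
  bijective phi /\ forall s t, phi (mul s t) = mul (phi s) (phi t).

Variable D : unitRingType.

(* (alpha, xi) in Z^2(S, D^* ) ; alpha is only relevant on S^*, xi on S^<2>. *)
Definition cocycle (alpha : S -> D -> D) (xi : S -> S -> D) : Prop :=
  [/\ (forall s, s != th -> ring_aut (alpha s)),
      (forall s t, mul s t != th -> xi s t \is a GRing.unit),
      (forall s t u, mul (mul s t) u != th ->
          alpha s (xi t u) * xi s (mul t u) = xi s t * xi (mul s t) u) &
      (forall s t, mul s t != th -> forall x,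
          alpha s (alpha t x) = xi s t * alpha (mul s t) x * (xi s t)^-1)].

(* (mu, eta) * (alpha, xi) = (beta, zeta); the first equation is
   mu_e o beta_s o mu_f^-1 = rho_{eta s} o alpha_s, composed on the right with mu_f. *)
Definition acts_to (mu : S -> D -> D) (eta : S -> D)
    (alpha : S -> D -> D) (xi : S -> S -> D)
    (beta : S -> D -> D) (zeta : S -> S -> D) : Prop :=
  [/\ (forall e, e \in E -> ring_aut (mu e)),
      (forall s, s != th -> eta s \is a GRing.unit),
      (forall s e f, s != th -> e \in E -> f \in E -> mul (mul e s) f = s ->
          forall x, mu e (beta s x) = eta s * alpha s (mu f x) * (eta s)^-1) &
      (forall s t e f, mul s t != th -> e \in E -> f \in E ->
          mul (mul e s) f = s ->
          mu e (zeta s t) = eta s * alpha s (eta t) * xi s t * (eta (mul s t))^-1)].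

Definition cohomologous alpha xi beta zeta : Prop :=
  exists mu eta, acts_to mu eta alpha xi beta zeta.

(* Twisted semigroup ring D^alpha_xi S : left D-space with basis S^*. *)
Definition Sstar := {x : S | x != th}.

Definition twalg := {ffun Sstar -> D}.

Definition twmul (alpha : S -> D -> D) (xi : S -> S -> D) (x y : twalg) : twalg :=
  [ffun u : Sstar => \sum_(s : Sstar) \sum_(t : Sstar | mul (val s) (val t) == val u)
      x s * alpha (val s) (y t) * xi (val s) (val t)].

Definition twalg_iso beta zeta alpha xi : Prop :=
  exists f : twalg -> twalg,
    [/\ bijective f, (forall x y, f (x + y) = f x + f y) &
        (forall x y, f (twmul beta zeta x y) = twmul alpha xi (f x) (f y))].

End SqFree.

From HB Require Import structures.
From mathcomp Require Import all_boot all_order all_algebra.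
From Stdlib Require Import ClassicalEpsilon.
Set Implicit Arguments. Unset Strict Implicit. Unset Printing Implicit Defensive.
Import GRing.Theory.
Local Open Scope ring_scope.

(* The elements idm e = xi(e,e)^-1 e (e in E) of D^alpha_xi S are orthogonal idempotents
   summing to 1, and each corner ring idm e * A * idm e = D e is a division ring.  A ring
   isomorphism f : D^beta_zeta S -> D^alpha_xi S carries the corresponding family of the
   source to another such family.  Two idempotents with division corners are equivalent as
   soon as p q p <> 0, and a rank argument over D shows that equivalence classes on both
   sides have the same size; so the two families are matched by a permutation pi of E and
   then conjugate by a unit.  After this inner correction f maps every (one-dimensional)
   corner e S f onto pi(e) S pi(f), i.e. d s |-> mu_e(d) eta(s) phi(s); multiplicativity
   makes phi an automorphism of S and (mu, eta) a cohomology from (alpha^phi, xi^phi) to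
   (beta, zeta).  Conversely, such data define that map, which is a ring isomorphism. *)

(** * Idempotents, matchings and a rank bound *)

Lemma exists_sumr_neq0 (V : zmodType) (I : finType) (P : pred I) (F : I -> V) :
  \sum_(i | P i) F i != 0 -> exists2 i, P i & F i != 0.
Proof.
have [i /andP[Pi Fi]|H0] := pickP (fun i => P i && (F i != 0)); first by exists i.
rewrite big1 ?eqxx // => i Pi; apply/eqP.
by move: (H0 i); rewrite Pi => /negbFE.
Qed.

Section IdempotentEquivalence.
Variable R : pzRingType.

Definition corner_div (q : R) := forall z, q * z * q = z -> z != 0 ->
  exists w, q * w * q = w /\ w * z = q.

Definition idem_equiv (p q : R) := exists x y,
  [/\ q * x = x /\ x * p = x, p * y = y /\ y * q = y & y * x = p /\ x * y = q].

Lemma corner_div_rinv (p q x y : R) : p * p = p -> q * q = q -> corner_div q ->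
  q * x = x -> x * p = x -> p * y = y -> y * q = y -> y * x = p -> p != 0 -> x * y = q.
Proof.
move=> pp qq dq qx xp py yq yx pn.
have xyxy : (x * y) * (x * y) = x * y by rewrite mulrA -(mulrA x) yx xp.
have xyn : x * y != 0.
  apply: contraNneq pn => xy0; apply/eqP.
  by rewrite -pp -{1}yx -yx mulrA -(mulrA y) xy0 mulr0 mul0r.
have qxyq : q * (x * y) * q = x * y by rewrite mulrA qx -mulrA yq.
have [w [qw wxy]] := dq (x * y) qxyq xyn.
by rewrite -wxy -{2}xyxy mulrA wxy mulrA qx.
Qed.

(* The equivalence is realised by x = q p and y = w q, w the inverse of p q p in pRp. *)
Lemma idem_equiv_nonorth (p q : R) : p * p = p -> q * q = q ->
  corner_div p -> corner_div q -> p * q * p != 0 -> idem_equiv p q.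
Proof.
move=> pp qq dp dq nz.
have pn : p != 0 by apply: contraNneq nz => ->; rewrite !mul0r.
have ppqpp : p * (p * q * p) * p = p * q * p by rewrite !mulrA pp -mulrA pp.
have [w [pwp wz]] := dp (p * q * p) ppqpp nz.
have pw : p * w = w by rewrite -pwp !mulrA pp.
have wp : w * p = w by rewrite -pwp -mulrA pp.
have yx : (w * q) * (q * p) = p.
  by rewrite -[RHS]wz -!mulrA (mulrA q) qq [RHS]mulrA wp.
have qqp : q * (q * p) = q * p by rewrite mulrA qq.
have qpp : (q * p) * p = q * p by rewrite -mulrA pp.
have pwq : p * (w * q) = w * q by rewrite mulrA pw.
have wqq : (w * q) * q = w * q by rewrite -mulrA qq.
exists (q * p), (w * q); split => //; split => //.
exact: (corner_div_rinv pp qq dq qqp qpp pwq wqq yx pn).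
Qed.

Lemma idem_equiv_sym p q : idem_equiv p q -> idem_equiv q p.
Proof. by move=> [x [y [[qx xp] [py yq] [yx xy]]]]; exists y, x. Qed.

Lemma idem_equiv_trans p q r : idem_equiv p q -> idem_equiv q r -> idem_equiv p r.
Proof.
move=> [x [y [[qx xp] [py yq] [yx xy]]]] [x' [y' [[rx xq] [qy yr] [yx' xy']]]].
exists (x' * x), (y * y'); split; split.
- by rewrite mulrA rx.
- by rewrite -mulrA xp.
- by rewrite mulrA py.
- by rewrite -mulrA yr.
- by rewrite -mulrA (mulrA y') yx' qx yx.
- by rewrite -mulrA (mulrA x) xy qy xy'.
Qed.

End IdempotentEquivalence.

Lemma idem_equiv_map (R R' : pzRingType) (f : R -> R') p q :
  {morph f : x y / x * y} -> idem_equiv p q -> idem_equiv (f p) (f q).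
Proof.
move=> fM [x [y [[qx xp] [py yq] [yx xy]]]]; exists (f x), (f y).
by rewrite -!fM qx xp py yq yx xy.
Qed.

Lemma corner_div_map (R R' : pzRingType) (f : R -> R') (g : R' -> R) q :
  {morph f : x y / x * y} -> cancel f g -> cancel g f -> f 0 = 0 ->
  corner_div q -> corner_div (f q).
Proof.
move=> fM fK gK f0 dq z zq zn.
have gzq : q * g z * q = g z by apply: (can_inj fK); rewrite !fM gK.
have gzn : g z != 0 by apply: contraNneq zn => gz0; rewrite -[z]gK gz0 f0.
have [w [qw wz]] := dq _ gzq gzn; exists (f w).
by rewrite -!fM qw -[z]gK -fM wz.
Qed.

Definition idem_equivb (R : pzRingType) (p q : R) : bool :=
  if excluded_middle_informative (idem_equiv p q) then true else false.

Lemma idem_equivP (R : pzRingType) (p q : R) : reflect (idem_equiv p q) (idem_equivb p q).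
Proof. by rewrite /idem_equivb; case: excluded_middle_informative => h; constructor. Qed.

Lemma idem_equiv_choice (R : pzRingType) (T : finType) (P : {set T}) (p q : T -> R) :
  (forall e, e \in P -> idem_equiv (p e) (q e)) -> exists X Y : T -> R, forall e, e \in P ->
  [/\ q e * X e = X e /\ X e * p e = X e, p e * Y e = Y e /\ Y e * q e = Y e &
      Y e * X e = p e /\ X e * Y e = q e].
Proof.
move=> Heq.
pose Q e (xy : R * R) := e \in P ->
  [/\ q e * xy.1 = xy.1 /\ xy.1 * p e = xy.1, p e * xy.2 = xy.2 /\ xy.2 * q e = xy.2 &
      xy.2 * xy.1 = p e /\ xy.1 * xy.2 = q e].
have ex e : exists xy, Q e xy.
  have [eP|eP] := boolP (e \in P); last by exists (0, 0) => /(negP eP).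
  by have [x [y h]] := Heq e eP; exists (x, y).
pose F e := proj1_sig (constructive_indefinite_description _ (ex e)).
have FP e : Q e (F e) := proj2_sig (constructive_indefinite_description _ (ex e)).
by exists (fun e => (F e).1), (fun e => (F e).2) => e eP; apply: FP.
Qed.

(* Summing the partial isometries x_e : p e -> a (pi e) gives a unit conjugating
   one complete orthogonal family onto the other. *)
Lemma conj_orth_idems (R : pzRingType) (T : finType) (E : {set T}) (p a : T -> R) (pi : T -> T) :
  (forall e, e \in E -> pi e \in E) -> {in E &, injective pi} ->
  (forall e, e \in E -> idem_equiv (p e) (a (pi e))) ->
  (forall e f, e \in E -> f \in E -> e != f -> p e * p f = 0) ->
  (forall e f, e \in E -> f \in E -> e != f -> a e * a f = 0) ->
  \sum_(e in E) p e = 1 -> \sum_(e in E) a e = 1 ->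
  exists u v : R, [/\ v * u = 1, u * v = 1 & forall e, e \in E -> u * p e * v = a (pi e)].
Proof.
move=> piE piI Heq po ao ps as_.
have [X [Y XY]] := idem_equiv_choice Heq.
have YX0 e e' : e \in E -> e' \in E -> e != e' -> Y e * X e' = 0.
  move=> eE e'E ne; have [[ax _] [_ ya] _] := XY e eE; have [[ax' _] _ _] := XY e' e'E.
  have pne : pi e != pi e' by apply: contra ne => /eqP h; apply/eqP; apply: piI.
  by rewrite -ya -ax' -mulrA (mulrA (a (pi e))) ao ?piE // mul0r mulr0.
have XY0 e e' : e \in E -> e' \in E -> e != e' -> X e * Y e' = 0.
  move=> eE e'E ne; have [[_ xp] _ _] := XY e eE; have [_ [py _] _] := XY e' e'E.
  by rewrite -xp -py -mulrA (mulrA (p e)) po ?mul0r ?mulr0.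
have diag (F G : T -> R) e : e \in E ->
    (forall e', e' \in E -> e != e' -> F e * G e' = 0) ->
    F e * \sum_(e' in E) G e' = F e * G e.
  move=> eE FG0; rewrite mulr_sumr (bigD1 e) //= big1 ?addr0 // => e' /andP[e'E ne].
  by apply: FG0; rewrite // eq_sym.
have piEE : pi @: E = E.
  apply/eqP; rewrite eqEcard card_in_imset // leqnn andbT.
  by apply/subsetP => g' /imsetP [e eE ->]; apply: piE.
exists (\sum_(e in E) X e), (\sum_(e in E) Y e); split.
- rewrite -ps mulr_suml; apply: eq_bigr => e eE.
  by rewrite diag //; [case: (XY e eE) => _ _ [] | move=> e'; apply: YX0].
- rewrite -as_ mulr_suml; transitivity (\sum_(e in E) a (pi e)); last first.
    by rewrite -(big_imset _ piI) piEE.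
  apply: eq_bigr => e eE.
  by rewrite diag //; [case: (XY e eE) => _ _ [] | move=> e'; apply: XY0].
- move=> e eE; rewrite mulr_suml (bigD1 e) //= big1 ?addr0 => [|e' /andP[e'E ne]].
    have [[_ xp] _ [_ xy]] := XY e eE; rewrite xp diag // => e'.
    exact: XY0.
  by have [[_ xp] _ _] := XY e' e'E; rewrite -xp -mulrA po ?mulr0.
Qed.

Section Matching.
Variables (T : finType) (E : {set T}) (Rl : T -> T -> bool).
Hypothesis Rl_block : forall e e' g g', Rl e g -> Rl e' g -> Rl e g' -> Rl e' g'.

Let row e := [set g in E | Rl e g].
Let col g := [set e in E | Rl e g].

Lemma block_row_eq e e' g : Rl e g -> Rl e' g -> row e = row e'.
Proof.
move=> r r'; apply/setP => h; rewrite !inE; apply/andb_id2l => _.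
by apply/idP/idP; [apply: Rl_block r r' | apply: Rl_block r' r].
Qed.

Lemma block_col_eq e g g' : Rl e g -> Rl e g' -> col g = col g'.
Proof.
move=> r r'; apply/setP => x; rewrite !inE; apply/andb_id2l => _.
by apply/idP/idP => h; [apply: Rl_block r h r' | apply: Rl_block r' h r].
Qed.

(* Rl is a disjoint union of complete bipartite blocks; equal block sizes give a perfect
   matching, sending the k-th element of a column to the k-th element of the matching row. *)
Lemma exists_matching :
  (forall e, e \in E -> exists2 g, g \in E & Rl e g) ->
  (forall e g, e \in E -> g \in E -> Rl e g -> #|col g| = #|row e|) ->
  exists pi : T -> T, (forall e, e \in E -> pi e \in E /\ Rl e (pi e)) /\ {in E &, injective pi}.
Proof.
move=> Hex Hcard; pose g0 e := odflt e [pick g in E | Rl e g].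
have g0P e : e \in E -> g0 e \in E /\ Rl e (g0 e).
  move=> eE; rewrite /g0; case: pickP => [g /andP[gE r]|H0] //=.
  by have [g gE r] := Hex e eE; move: (H0 g); rewrite gE r.
have eC e : e \in E -> e \in col (g0 e) by move=> eE; rewrite inE eE; case: (g0P e eE).
have size_eq e : e \in E -> size (enum (col (g0 e))) = size (enum (row e)).
  by move=> eE; have [g0E r] := g0P e eE; rewrite -!cardE (Hcard e (g0 e)).
pose pi e := nth e (enum (row e)) (index e (enum (col (g0 e)))).
have piR e : e \in E -> pi e \in row e.
  by move=> eE; rewrite -mem_enum mem_nth // -size_eq // index_mem mem_enum eC.
have piRl e : e \in E -> pi e \in E /\ Rl e (pi e) by move=> /piR; rewrite inE => /andP[].
exists pi; split => // e e' eE e'E pe.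
have [_ r] := piRl e eE; have [_ r'] := piRl e' e'E; rewrite -pe in r'.
have RR := block_row_eq r r'.
have CC : col (g0 e) = col (g0 e').
  by rewrite (block_col_eq (g0P e eE).2 r) (block_col_eq (g0P e' e'E).2 (piRl e' e'E).2) pe.
have ie : (index e (enum (col (g0 e'))) < size (enum (row e')))%N.
  by rewrite -size_eq // index_mem mem_enum -CC eC.
have ie' : (index e' (enum (col (g0 e'))) < size (enum (row e')))%N.
  by rewrite -size_eq // index_mem mem_enum eC.
move: pe; rewrite /pi RR CC (set_nth_default e' e ie) => /eqP.
rewrite nth_uniq ?enum_uniq // => /eqP ii.
by rewrite -(nth_index e (_ : e \in enum (col (g0 e')))) ?ii ?nth_index // mem_enum ?eC // -CC eC.
Qed.

End Matching.

(* Gaussian elimination on the pivot C i0 k: the #|P| rows of C are independent. *)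
Lemma card_le_dual_family (D : unitRingType) (HD : division_ring D) (I J : finType)
    (Q : {set J}) (P : {set I}) (C : I -> J -> D) (M : J -> I -> D) :
  (forall i i', i \in P -> i' \in P -> \sum_(j in Q) C i j * M j i' = (i == i')%:R) ->
  (#|P| <= #|Q|)%N.
Proof.
have [n leQn] := ubnP #|Q|; elim: n Q leQn P C M => // n IH Q ltQ P C M H.
have [->|[i0 i0P]] := set_0Vmem P; first by rewrite cards0.
have [k kQ ck] : exists2 k, k \in Q & C i0 k != 0.
  have [k /andP[kQ ck]|H0] := pickP (fun k => (k \in Q) && (C i0 k != 0)); first by exists k.
  have := H i0 i0 i0P i0P; rewrite eqxx big1 => [/esym/eqP|j jQ]; first by rewrite oner_eq0.
  by move: (H0 j); rewrite jQ /= => /negbFE/eqP ->; rewrite mul0r.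
have cU := HD _ ck.
pose C' i j := C i j - C i k * (C i0 k)^-1 * C i0 j.
have := IH (Q :\ k) _ (P :\ i0) C' M.
rewrite (cardsD1 k Q) kQ (cardsD1 i0 P) i0P /= add1n ltnS; apply.
  by move: ltQ; rewrite (cardsD1 k Q) kQ /= add1n ltnS.
move=> i i'; rewrite !in_setD1 => /andP[ii0 iP] /andP[i'i0 i'P].
have -> : \sum_(j in Q :\ k) C' i j * M j i' = \sum_(j in Q) C' i j * M j i'.
  rewrite [RHS](bigD1 k) //= /C' mulrVK // subrr mul0r add0r.
  by apply: eq_bigl => j; rewrite in_setD1 andbC.
rewrite /C'; under eq_bigr do rewrite mulrBl.
rewrite sumrB H //; under eq_bigr do rewrite -!mulrA.
by rewrite -mulr_sumr -mulr_sumr H // [i0 == i']eq_sym (negbTE i'i0) !mulr0 subr0.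
Qed.
(** * Square-free semigroups and twisted semigroup rings *)

Section SquareFree.
Variables (S : finType) (mul : S -> S -> S) (th : S) (E : {set S}).
Hypothesis HS : square_free mul th E.

Lemma mulsA s t u : mul (mul s t) u = mul s (mul t u). Proof. by case: HS. Qed.
Lemma mul0s s : mul th s = th. Proof. by case: HS => _ [H _]; case: (H s). Qed.
Lemma muls0 s : mul s th = th. Proof. by case: HS => _ [H _]; case: (H s). Qed.
Lemma E_neq0 e : e \in E -> e != th. Proof. by case: HS => _ [_ [H _]] /H []. Qed.
Lemma E_idem e : e \in E -> mul e e = e. Proof. by case: HS => _ [_ [H _]] /H []. Qed.
Lemma E_orth e f : e \in E -> f \in E -> e != f -> mul e f = th.
Proof. by case: HS => _ [_ [_ [H _]]]; apply: H. Qed.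

Lemma mul_neq0l s t : mul s t != th -> s != th.
Proof. by apply: contraNneq => ->; rewrite mul0s. Qed.
Lemma mul_neq0r s t : mul s t != th -> t != th.
Proof. by apply: contraNneq => ->; rewrite muls0. Qed.

Lemma exists_corner s : exists e f, [/\ e \in E, f \in E, mul e s = s & mul s f = s].
Proof.
case: HS => _ [_ [_ [_ [H _]]]]; have [e [f [u [eE fE ->]]]] := H s.
exists e, f; split => //; first by rewrite -!mulsA E_idem.
by rewrite !mulsA E_idem.
Qed.

Lemma corner_split e f s : e \in E -> f \in E -> mul (mul e s) f = s ->
  mul e s = s /\ mul s f = s.
Proof.
move=> eE fE efs; split.
  by rewrite -{2}efs -{1}efs -!mulsA E_idem.
by rewrite -{1}efs mulsA E_idem.
Qed.

Lemma corner_uniq e f s t : e \in E -> f \in E -> s != th -> t != th ->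
  mul e s = s -> mul s f = s -> mul e t = t -> mul t f = t -> s = t.
Proof.
case: HS => _ [_ [_ [_ [_ H]]]] eE fE sn tn es sf et tf.
by have := H e f s t eE fE; rewrite es sf et tf; apply.
Qed.

Lemma mul_corner_orth e f s t : e \in E -> f \in E -> f != e ->
  mul s f = s -> mul e t = t -> mul s t = th.
Proof.
move=> eE fE fe sf et.
by rewrite -sf -et mulsA -(mulsA f) (E_orth fE eE fe) mul0s muls0.
Qed.

Lemma left_idem_uniq e e' s : e \in E -> e' \in E -> s != th ->
  mul e s = s -> mul e' s = s -> e = e'.
Proof.
move=> eE e'E sn es e's; apply/eqP; apply: contraR sn => ne.
have : mul e' s = th by rewrite -es -mulsA (E_orth e'E eE) ?mul0s // eq_sym.
by rewrite e's => ->.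
Qed.

Lemma right_idem_uniq f f' s : f \in E -> f' \in E -> s != th ->
  mul s f = s -> mul s f' = s -> f = f'.
Proof.
move=> fE f'E sn sf sf'; apply/eqP; apply: contraR sn => ne.
have : mul s f' = th by apply: (mul_corner_orth f'E fE ne sf); apply: E_idem.
by rewrite sf' => ->.
Qed.

Lemma diag_corner e s : e \in E -> s != th -> mul e s = s -> mul s e = s -> s = e.
Proof.
by move=> eE sn es se; apply: (corner_uniq eE eE sn (E_neq0 eE)); rewrite ?E_idem.
Qed.

End SquareFree.

Section Coefficients.
Variables (S : finType) (th : S) (D : unitRingType).
Local Notation A := (twalg th D).

Definition coef (x : A) (s : S) : D := if insub s is Some u then x u else 0.
Definition mono (c : D) (s : S) : A := [ffun u : Sstar th => if val u == s then c else 0].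

Lemma coef_val x (u : Sstar th) : coef x (val u) = x u.
Proof. by rewrite /coef valK. Qed.
Lemma coef_th x : coef x th = 0.
Proof. by rewrite /coef insubF // eqxx. Qed.
Lemma eq_coef x y : (forall s, s != th -> coef x s = coef y s) -> x = y.
Proof. by move=> H; apply/ffunP => -[u un]; rewrite -!coef_val H. Qed.

Lemma coef_mono c s t : coef (mono c s) t = if (t != th) && (t == s) then c else 0.
Proof. by rewrite /coef; case: insubP => [u -> <-|/negbTE -> //]; rewrite ffunE. Qed.
Lemma coefD x y t : coef (x + y) t = coef x t + coef y t.
Proof. by rewrite /coef; case: insubP => [u _ _|_]; rewrite ?ffunE ?addr0. Qed.
Lemma coef0 t : coef 0 t = 0.
Proof. by rewrite /coef; case: insubP => [u _ _|_]; rewrite ?ffunE. Qed.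
Lemma coef_sum (I : Type) (r : seq I) (P : pred I) (F : I -> A) t :
  coef (\sum_(i <- r | P i) F i) t = \sum_(i <- r | P i) coef (F i) t.
Proof. exact: (big_morph (coef^~ t) (fun x y => coefD x y t) (coef0 t)). Qed.

Lemma mono_th c : mono c th = 0.
Proof. by apply/ffunP => u; rewrite !ffunE (negbTE (valP u)). Qed.
Lemma mono0 s : mono 0 s = 0.
Proof. by apply/ffunP => u; rewrite !ffunE; case: ifP. Qed.
Lemma monoD c d s : mono (c + d) s = mono c s + mono d s.
Proof. by apply/ffunP => u; rewrite !ffunE; case: ifP; rewrite ?addr0. Qed.
Lemma mono_eq0 c s : s != th -> mono c s = 0 -> c = 0.
Proof. by move=> sn /(congr1 (coef^~ s)); rewrite coef_mono sn eqxx coef0. Qed.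
Lemma mono_inj c c' s : s != th -> mono c s = mono c' s -> c = c'.
Proof. by move=> sn /(congr1 (coef^~ s)); rewrite !coef_mono sn eqxx. Qed.
Lemma mono_eq c c' s s' : s != th -> c != 0 -> mono c s = mono c' s' -> s' = s /\ c' = c.
Proof.
move=> sn cn /(congr1 (coef^~ s)); rewrite !coef_mono sn eqxx /=.
by case: eqP => [->|_] // c0; rewrite c0 eqxx in cn.
Qed.

Lemma coef_expand x : x = \sum_(s : S) mono (coef x s) s.
Proof.
apply: eq_coef => t tn; rewrite coef_sum (bigD1 t) //= coef_mono tn eqxx big1 ?addr0 //.
by move=> s st; rewrite coef_mono [t == s]eq_sym (negbTE st) andbF.
Qed.

Lemma sum_nonzero (F : S -> D) : F th = 0 -> \sum_(s : S) F s = \sum_(u : Sstar th) F (val u).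
Proof.
move=> F0; rewrite (bigD1 th) //= F0 add0r.
rewrite (reindex_omap (val : Sstar th -> S) insub) => [|i Pi]; last by rewrite insubT.
by apply: eq_bigl => u; rewrite (valP u) valK eqxx.
Qed.

End Coefficients.
Arguments mono {S th D} c s.

Section TwistedProduct.
Variables (S : finType) (mul : S -> S -> S) (th : S) (E : {set S}).
Hypothesis HS : square_free mul th E.
Variables (D : unitRingType) (alpha : S -> D -> D) (xi : S -> S -> D).
Hypothesis Hax : cocycle mul th alpha xi.
Local Notation tm := (@twmul S mul th D alpha xi).
Local Notation A := (twalg th D).

Lemma alpha_aut s : s != th -> ring_aut (alpha s). Proof. by case: Hax => H _ _ _; apply: H. Qed.
Lemma alphaD s x y : s != th -> alpha s (x + y) = alpha s x + alpha s y.
Proof. by move=> /alpha_aut []. Qed.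
Lemma alphaM s x y : s != th -> alpha s (x * y) = alpha s x * alpha s y.
Proof. by move=> /alpha_aut []. Qed.
Lemma alpha1 s : s != th -> alpha s 1 = 1. Proof. by move=> /alpha_aut []. Qed.
Lemma alpha0 s : s != th -> alpha s 0 = 0.
Proof. by move=> sn; apply: (@addrI _ (alpha s 0)); rewrite -alphaD // !addr0. Qed.
Lemma xi_unit s t : mul s t != th -> xi s t \is a GRing.unit.
Proof. by case: Hax => _ H _ _; apply: H. Qed.
Lemma cocycle_assoc s t u : mul (mul s t) u != th ->
  alpha s (xi t u) * xi s (mul t u) = xi s t * xi (mul s t) u.
Proof. by case: Hax => _ _ H _; apply: H. Qed.
Lemma cocycle_conj s t x : mul s t != th ->
  alpha s (alpha t x) = xi s t * alpha (mul s t) x * (xi s t)^-1.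
Proof. by case: Hax => _ _ _ H st; apply: H. Qed.

Lemma coef_twmul x y w : w != th -> coef (tm x y) w =
  \sum_(s : S) \sum_(t : S | mul s t == w) coef x s * alpha s (coef y t) * xi s t.
Proof.
move=> wn; pose u : Sstar th := Sub w wn; have un : val u != th := valP u.
rewrite (_ : w = val u) // coef_val ffunE (@sum_nonzero _ th); last first.
  by apply: big1 => t; rewrite (mul0s HS) // => /eqP thu; move: un; rewrite -thu eqxx.
apply: eq_bigr => s _; rewrite big_mkcond [RHS]big_mkcond (@sum_nonzero _ th); last first.
  by rewrite (muls0 HS) //; case: eqP => // thu; move: un; rewrite -thu eqxx.
by apply: eq_bigr => t _; rewrite !coef_val.
Qed.

Lemma twmul_expand x y :
  tm x y = \sum_(s : S) \sum_(t : S) mono (coef x s * alpha s (coef y t) * xi s t) (mul s t).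
Proof.
apply: eq_coef => w wn; rewrite coef_twmul // coef_sum; apply: eq_bigr => s _.
rewrite coef_sum [LHS]big_mkcond; apply: eq_bigr => t _.
by rewrite coef_mono wn /= eq_sym.
Qed.

Lemma twmulDl : left_distributive tm +%R.
Proof.
move=> x y z; apply: eq_coef => w wn; rewrite coefD !coef_twmul // -big_split.
apply: eq_bigr => s _; rewrite -big_split; apply: eq_bigr => t _.
by rewrite coefD !mulrDl.
Qed.
Lemma twmulDr : right_distributive tm +%R.
Proof.
move=> x y z; apply: eq_coef => w wn; rewrite coefD !coef_twmul // -big_split.
apply: eq_bigr => s _; rewrite -big_split; apply: eq_bigr => t _; rewrite coefD.
have [->|sn] := eqVneq s th; first by rewrite !coef_th !mul0r /= addr0.
by rewrite alphaD // mulrDr mulrDl.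
Qed.
Lemma twmul0l x : tm 0 x = 0.
Proof.
apply: eq_coef => w wn; rewrite coef_twmul // coef0 big1 // => s _.
by rewrite big1 // => t _; rewrite coef0 !mul0r.
Qed.
Lemma twmul0r x : tm x 0 = 0.
Proof.
apply: eq_coef => w wn; rewrite coef_twmul // coef0 big1 // => s _.
rewrite big1 // => t _; have [->|sn] := eqVneq s th; first by rewrite coef_th !mul0r.
by rewrite coef0 alpha0 // mulr0 mul0r.
Qed.
Lemma twmul_suml (I : Type) (r : seq I) (P : pred I) (F : I -> A) y :
  tm (\sum_(i <- r | P i) F i) y = \sum_(i <- r | P i) tm (F i) y.
Proof. exact: (big_morph (tm^~ y) (fun x z => twmulDl x z y) (twmul0l y)). Qed.
Lemma twmul_sumr (I : Type) (r : seq I) (P : pred I) (F : I -> A) y :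
  tm y (\sum_(i <- r | P i) F i) = \sum_(i <- r | P i) tm y (F i).
Proof. exact: (big_morph (tm y) (twmulDr y) (twmul0r y)). Qed.

Lemma twmul_mono c d s t : tm (mono c s) (mono d t) = mono (c * alpha s d * xi s t) (mul s t).
Proof.
have [->|sn] := eqVneq s th; first by rewrite (mul0s HS) // !mono_th twmul0l.
have [->|tn] := eqVneq t th; first by rewrite (muls0 HS) // !mono_th twmul0r.
rewrite twmul_expand (bigD1 s) //= [X in _ + X]big1 ?addr0; last first.
  move=> s' ns'; apply: big1 => t' _.
  by rewrite coef_mono (negbTE ns') andbF !mul0r mono0.
rewrite (bigD1 t) //= [X in _ + X]big1 ?addr0; last first.
  by move=> t' nt'; rewrite [coef (mono d t) _]coef_mono (negbTE nt') andbF alpha0 // mulr0 mul0r mono0.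
by rewrite !coef_mono sn tn !eqxx.
Qed.

Lemma twmul_monoA a b c s t u :
  tm (tm (mono a s) (mono b t)) (mono c u) = tm (mono a s) (tm (mono b t) (mono c u)).
Proof.
rewrite !twmul_mono (mulsA HS) //.
have [->|stu] := eqVneq (mul s (mul t u)) th; first by rewrite !mono_th.
rewrite -(mulsA HS) // in stu; have st := mul_neq0l HS stu.
have tu : mul t u != th by apply: (@mul_neq0r _ _ _ _ HS s); rewrite -(mulsA HS).
congr mono; rewrite !alphaM ?(mul_neq0l HS st) // cocycle_conj // -!mulrA.
by rewrite cocycle_assoc // !mulrA mulrVK // xi_unit.
Qed.

Lemma twmulA : associative tm.
Proof.
move=> x y z; rewrite (coef_expand x) (coef_expand y) (coef_expand z).
set X := \sum_s _; set Y := \sum_s _; set Z := \sum_s _.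
rewrite [tm X Y]twmul_suml !twmul_suml; apply: eq_bigr => s _.
rewrite twmul_sumr [tm _ Y]twmul_sumr twmul_suml; apply: eq_bigr => t _.
by rewrite !twmul_sumr; apply: eq_bigr => u _; rewrite twmul_monoA.
Qed.

Lemma xi_idem_unit e : e \in E -> xi e e \is a GRing.unit.
Proof. by move=> eE; apply: xi_unit; rewrite (E_idem HS) ?(E_neq0 HS). Qed.

Lemma alpha_idem e y : e \in E -> alpha e y = xi e e * y * (xi e e)^-1.
Proof.
move=> eE; have [g _ gK] : bijective (alpha e) by case: (alpha_aut (E_neq0 HS eE)).
by rewrite -{1}[y]gK cocycle_conj (E_idem HS) ?(E_neq0 HS) // gK.
Qed.

Lemma xi_left_idem e s : e \in E -> s != th -> mul e s = s -> xi e s = xi e e.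
Proof.
move=> eE sn es; have U := xi_idem_unit eE.
have Us : xi e s \is a GRing.unit by apply: xi_unit; rewrite es.
have := @cocycle_assoc e e s; rewrite (E_idem HS eE) es alpha_idem // => /(_ sn) h.
have : xi e e * (xi e s * ((xi e e)^-1 * xi e s)) = xi e e * (xi e s * 1).
  by rewrite mulr1 -h !mulrA.
move=> /(mulrI U) /(mulrI Us) h1.
by rewrite -[LHS]mul1r -(mulrV U) -mulrA h1 mulr1.
Qed.

Lemma xi_right_idem f s : f \in E -> s != th -> mul s f = s -> xi s f = alpha s (xi f f).
Proof.
move=> fE sn sf; have Us : xi s f \is a GRing.unit by apply: xi_unit; rewrite sf.
have := @cocycle_assoc s f f; rewrite (E_idem HS fE) !sf => /(_ sn) h.
by apply: (mulIr Us); rewrite h.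
Qed.

Definition idm e : A := mono (xi e e)^-1 e.
Definition twone : A := \sum_(e in E) idm e.

Lemma idm_mul_mono e c s : e \in E -> mul e s = s -> tm (idm e) (mono c s) = mono c s.
Proof.
move=> eE es; rewrite /idm twmul_mono es.
have [->|sn] := eqVneq s th; first by rewrite !mono_th.
by rewrite alpha_idem // xi_left_idem // !mulrA mulVr ?mul1r ?mulrVK // xi_idem_unit.
Qed.

Lemma mono_mul_idm f c s : f \in E -> mul s f = s -> tm (mono c s) (idm f) = mono c s.
Proof.
move=> fE sf; rewrite /idm twmul_mono sf.
have [->|sn] := eqVneq s th; first by rewrite !mono_th.
have aU : alpha s (xi f f) \is a GRing.unit.
  by apply/unitrP; exists (alpha s (xi f f)^-1); rewrite -!alphaM // mulrV ?mulVr ?alpha1 // xi_idem_unit.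
have aV : alpha s (xi f f)^-1 = (alpha s (xi f f))^-1.
  by rewrite -[LHS]mulr1 -(mulrV aU) mulrA -alphaM // mulVr ?alpha1 ?mul1r // xi_idem_unit.
by rewrite aV (xi_right_idem fE sn sf) mulrVK.
Qed.

Lemma idm_mul_mono0 e c s : e \in E -> mul e s != s -> tm (idm e) (mono c s) = 0.
Proof.
move=> eE es; have [e' [f [e'E _ e's _]]] := exists_corner HS s.
have ne : e != e' by apply: contraNneq es => ->; rewrite e's.
by rewrite /idm twmul_mono (mul_corner_orth HS e'E eE ne (E_idem HS eE) e's) mono_th.
Qed.

Lemma mono_mul_idm0 f c s : f \in E -> mul s f != s -> tm (mono c s) (idm f) = 0.
Proof.
move=> fE sf; have [e [f' [_ f'E _ sf']]] := exists_corner HS s.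
have ne : f' != f by apply: contraNneq sf => <-; rewrite sf'.
by rewrite /idm twmul_mono (mul_corner_orth HS fE f'E ne sf' (E_idem HS fE)) mono_th.
Qed.

Lemma twmul1_mono c s : tm twone (mono c s) = mono c s.
Proof.
have [->|sn] := eqVneq s th; first by rewrite mono_th twmul0r.
have [e0 [f [e0E _ e0s _]]] := exists_corner HS s.
rewrite twmul_suml (bigD1 e0) //= idm_mul_mono // big1 ?addr0 // => e /andP[eE ne].
apply: idm_mul_mono0 => //; apply: contra ne => /eqP es.
by apply/eqP; apply: (left_idem_uniq HS eE e0E sn).
Qed.

Lemma twmul_mono1 c s : tm (mono c s) twone = mono c s.
Proof.
have [->|sn] := eqVneq s th; first by rewrite mono_th twmul0l.
have [e [f0 [_ f0E _ sf0]]] := exists_corner HS s.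
rewrite twmul_sumr (bigD1 f0) //= mono_mul_idm // big1 ?addr0 // => f /andP[fE nf].
apply: mono_mul_idm0 => //; apply: contra nf => /eqP sf.
by apply/eqP; apply: (right_idem_uniq HS fE f0E sn).
Qed.

Lemma twmul1 : left_id twone tm.
Proof.
move=> x; rewrite (coef_expand x) twmul_sumr.
by apply: eq_bigr => s _; apply: twmul1_mono.
Qed.

Lemma twmulr1 : right_id twone tm.
Proof.
move=> x; rewrite (coef_expand x) twmul_suml.
by apply: eq_bigr => s _; apply: twmul_mono1.
Qed.

Lemma idm_idem e : e \in E -> tm (idm e) (idm e) = idm e.
Proof. by move=> eE; apply: idm_mul_mono; rewrite ?(E_idem HS). Qed.

Lemma idm_orth e f : e \in E -> f \in E -> e != f -> tm (idm e) (idm f) = 0.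
Proof. by move=> eE fE ef; rewrite /idm twmul_mono (E_orth HS eE fE ef) mono_th. Qed.

Lemma idm_neq0 e : e \in E -> idm e != 0.
Proof.
move=> eE; apply/eqP => /(mono_eq0 (E_neq0 HS eE)) h.
by move: (xi_idem_unit eE); rewrite -unitrV h unitr0.
Qed.

Definition in_corner g h (x : A) := tm (tm (idm g) x) (idm h) = x.

Lemma mono_in_corner g h c s : g \in E -> h \in E -> mul g s = s -> mul s h = s ->
  in_corner g h (mono c s).
Proof. by move=> gE hE gs sh; rewrite /in_corner idm_mul_mono // mono_mul_idm. Qed.

Lemma coef_corner g h x w : g \in E -> h \in E ->
  coef (tm (tm (idm g) x) (idm h)) w != 0 -> mul g w = w /\ mul w h = w.
Proof.
move=> gE hE; rewrite (coef_expand x) twmul_sumr twmul_suml coef_sum.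
move=> /exists_sumr_neq0 [s _]; rewrite /idm !twmul_mono coef_mono.
case: ifP => [/andP[_ /eqP ->] _|]; last by rewrite eqxx.
by split; [rewrite -!(mulsA HS) (E_idem HS gE) | rewrite !(mulsA HS) (E_idem HS hE)].
Qed.

Lemma corner_mono g h x t : g \in E -> h \in E -> in_corner g h x ->
  t != th -> mul g t = t -> mul t h = t -> x = mono (coef x t) t.
Proof.
move=> gE hE Hx tn gt tgh; apply: eq_coef => w wn; rewrite coef_mono wn /=.
case: eqP => [->//|wt]; apply/eqP; apply: contraT => nz.
have [gw wh] : mul g w = w /\ mul w h = w by apply: (coef_corner (x := x) gE hE); rewrite Hx.
by case: (wt (corner_uniq HS gE hE wn tn gw wh gt tgh)).
Qed.

Lemma in_cornerP g h x : g \in E -> h \in E -> in_corner g h x ->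
  x = 0 \/ exists t, [/\ t != th, mul g t = t, mul t h = t & x = mono (coef x t) t].
Proof.
move=> gE hE Hx.
case: (pickP (fun t => [&& t != th, mul g t == t & mul t h == t])) => [t|H0].
  case/and3P=> tn /eqP gt /eqP tgh; right; exists t; split => //.
  exact: (corner_mono gE hE Hx).
left; apply: eq_coef => w wn; rewrite coef0; apply/eqP; apply: contraT => nz.
have [gw wh] : mul g w = w /\ mul w h = w by apply: (coef_corner (x := x) gE hE); rewrite Hx.
by move: (H0 w); rewrite wn gw wh !eqxx.
Qed.

Hypothesis HD : division_ring D.

Lemma corner_divring g z : g \in E -> in_corner g g z -> z != 0 ->
  exists w, in_corner g g w /\ tm w z = idm g.
Proof.
move=> gE Hz zn; have gn := E_neq0 HS gE.
have [z0|[t [tn gt tg zt]]] := in_cornerP gE gE Hz; first by rewrite z0 eqxx in zn.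
move: zt zn; rewrite (diag_corner HS gE tn gt tg) => -> zn; set c := coef z g in zn *.
have cn : c != 0 by apply: contraNneq zn => ->; rewrite mono0.
have acn : alpha g c != 0.
  apply: contraNneq cn => h; have [_ _ _ /bij_inj ainj] := alpha_aut gn.
  by apply/eqP/ainj; rewrite h alpha0.
have U := xi_idem_unit gE.
exists (mono ((xi g g)^-1 * (xi g g)^-1 * (alpha g c)^-1) g); split.
  by apply: mono_in_corner; rewrite ?(E_idem HS).
by rewrite twmul_mono (E_idem HS gE) mulrVK ?HD // mulrVK.
Qed.

End TwistedProduct.

Section TwistedRing.
Variables (S : finType) (mul : S -> S -> S) (th : S) (E : {set S}).
Variables (D : unitRingType) (alpha : S -> D -> D) (xi : S -> S -> D).

(* A copy of twalg th D indexed by the proofs, to carry the ring structure. *)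
Definition tw (_ : square_free mul th E) (_ : cocycle mul th alpha xi) := twalg th D.

Variables (HS : square_free mul th E) (Hax : cocycle mul th alpha xi).

HB.instance Definition _ := GRing.Zmodule.on (tw HS Hax).
HB.instance Definition _ := GRing.Zmodule_isPzRing.Build (tw HS Hax)
  (twmulA HS Hax) (twmul1 HS Hax) (twmulr1 HS Hax) (twmulDl HS alpha xi) (twmulDr HS Hax).

Lemma twmulE (x y : tw HS Hax) : x * y = twmul mul alpha xi x y. Proof. by []. Qed.

Definition eps g : tw HS Hax := idm th xi g.

Lemma eps_idem g : g \in E -> eps g * eps g = eps g.
Proof. exact: idm_idem. Qed.
Lemma eps_orth g h : g \in E -> h \in E -> g != h -> eps g * eps h = 0.
Proof. exact: idm_orth. Qed.
Lemma sum_eps : \sum_(g in E) eps g = 1.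
Proof. by []. Qed.
Lemma eps_neq0 g : g \in E -> eps g != 0.
Proof. exact: (idm_neq0 HS Hax). Qed.
Lemma eps_corner_div g : division_ring D -> g \in E -> corner_div (eps g).
Proof.
by move=> HD gE z zg zn; have [w [wg wz]] := corner_divring HS Hax HD gE zg zn; exists w.
Qed.

End TwistedRing.

(** * From ring isomorphisms to thin cohomology *)

Section EquivalenceClasses.
Variables (S : finType) (mul : S -> S -> S) (th : S) (E : {set S}).
Hypothesis HS : square_free mul th E.
Variables (D : unitRingType) (alpha : S -> D -> D) (xi : S -> S -> D).
Hypothesis Hax : cocycle mul th alpha xi.
Hypothesis HD : division_ring D.
Local Notation A := (tw HS Hax).
Local Notation eps := (eps HS Hax).

Lemma coef_eps_mul g x w : g \in E -> coef (eps g * x) w != 0 -> mul g w = w.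
Proof.
move=> gE; rewrite (coef_expand x) twmulE (twmul_sumr HS Hax) coef_sum.
move=> /exists_sumr_neq0 [s _]; rewrite /eps /idm (twmul_mono HS Hax) coef_mono.
case: ifP => [/andP[_ /eqP ->] _|]; last by rewrite eqxx.
by rewrite -(mulsA HS) (E_idem HS gE).
Qed.

Lemma exists_eps_equiv (p : A) : p * p = p -> corner_div p -> p != 0 ->
  exists2 g, g \in E & idem_equiv p (eps g).
Proof.
move=> pp dp pn; have : p * 1 * p != 0 by rewrite mulr1 pp.
rewrite -(sum_eps HS Hax) mulr_sumr mulr_suml => /exists_sumr_neq0 [g gE nz].
by exists g => //; apply: idem_equiv_nonorth => //; [exact: eps_idem | exact: eps_corner_div].
Qed.

(* If s lies in g S h and s t = g, then s and a suitable t' in h S g are mutually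
   inverse partial isometries between eps h and eps g. *)
Lemma eps_equiv_of_corner h g s t : h \in E -> g \in E -> s != th -> t != th ->
  mul g s = s -> mul s h = s -> mul s t = g -> idem_equiv (eps h) (eps g).
Proof.
move=> hE gE sn tn gs sh st.
pose t' := mul (mul h t) g.
have st' : mul s t' = g by rewrite /t' -!(mulsA HS) sh st (E_idem HS gE).
have gn := E_neq0 HS gE.
have t'n : t' != th by apply: contraNneq gn => t'0; rewrite -st' t'0 (muls0 HS).
have ht' : mul h t' = t' by rewrite /t' -!(mulsA HS) (E_idem HS hE).
have t'g : mul t' g = t' by rewrite /t' (mulsA HS (mul h t) g g) (E_idem HS gE).
have t'sn : mul t' s != th.
  by apply: contraNneq sn => t's0; rewrite -gs -{1}st' (mulsA HS) t's0 (muls0 HS).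
have t's : mul t' s = h.
  apply: (diag_corner HS hE t'sn); first by rewrite -(mulsA HS) ht'.
  by rewrite (mulsA HS) sh.
have U : xi t' s \is a GRing.unit by apply: (xi_unit Hax); rewrite t's (E_neq0 HS hE).
set x : A := mono 1 s; set y : A := mono ((xi h h)^-1 * (xi t' s)^-1) t'.
have gx : eps g * x = x by rewrite twmulE (idm_mul_mono HS Hax).
have xh : x * eps h = x by rewrite twmulE (mono_mul_idm HS Hax).
have hy : eps h * y = y by rewrite twmulE (idm_mul_mono HS Hax).
have yg : y * eps g = y by rewrite twmulE (mono_mul_idm HS Hax).
have yx : y * x = eps h.
  by rewrite twmulE (twmul_mono HS Hax) (alpha1 Hax t'n) mulr1 t's mulrVK.
exists x, y; split => //; split => //.
exact: (corner_div_rinv (eps_idem HS Hax hE) (eps_idem HS Hax gE) (eps_corner_div HD gE)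
  gx xh hy yg yx (eps_neq0 HS Hax hE)).
Qed.

Definition corner_row g := [set s | [&& s != th, mul g s == s &
  [exists t, (t != th) && (mul s t == g)]]].

Definition row_weight g (y : A) s :=
  (\sum_(t | mul s t == g) alpha s (coef y t) * xi s t) * xi g g.

Lemma coef_eps_mul_mul g x y : g \in E -> eps g * x = x ->
  coef (x * y) g * xi g g = \sum_(s in corner_row g) coef x s * row_weight g y s.
Proof.
move=> gE gx; have gn := E_neq0 HS gE.
rewrite twmulE (coef_twmul HS alpha xi _ _ gn) mulr_suml [RHS]big_rmcond => [|s].
  apply: eq_bigr => s _; rewrite /row_weight !mulr_suml mulr_sumr.
  by apply: eq_bigr => t _; rewrite !mulrA.
move=> sQ.
have [->|sn] := eqVneq s th; first by rewrite coef_th mul0r.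
have [gs|gs] := eqVneq (mul g s) s; last first.
  suff -> : coef x s = 0 by rewrite mul0r.
  by apply/eqP; apply: contraNT gs => nz; apply/eqP; apply: (coef_eps_mul (x := x) gE); rewrite gx.
rewrite /row_weight big1 ?mul0r ?mulr0 // => t /eqP st.
case/negP: sQ; rewrite inE sn gs eqxx /=; apply/existsP; exists t.
by rewrite st eqxx andbT; apply: contraNneq gn => t0; rewrite -st t0 (muls0 HS).
Qed.

Lemma card_corner_row_le g : g \in E ->
  (#|corner_row g| <= #|[set h in E | idem_equivb (eps h) (eps g)]|)%N.
Proof.
move=> gE; pose r s := odflt th [pick h in E | mul s h == s].
have rP s : s != th -> r s \in E /\ mul s (r s) = s.
  move=> sn; rewrite /r; case: pickP => [h /andP[hE /eqP sh] | H0] //=.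
  by have [_ [f [_ fE _ sf]]] := exists_corner HS s; move: (H0 f); rewrite fE sf eqxx.
have rowP s : s \in corner_row g ->
    [/\ s != th, mul g s = s & exists2 t, t != th & mul s t = g].
  by rewrite inE => /and3P[sn /eqP gs /existsP [t /andP[tn /eqP st]]]; split => //; exists t.
rewrite -(card_in_imset (f := r) (D := corner_row g)) => [|s s' sQ s'Q rr]; last first.
  have [sn gs _] := rowP s sQ; have [s'n gs' _] := rowP s' s'Q.
  have [rE sr] := rP s sn; have [_ s'r] := rP s' s'n; rewrite -rr in s'r.
  exact: (corner_uniq HS gE rE sn s'n gs sr gs' s'r).
apply: subset_leq_card; apply/subsetP => h /imsetP [s sQ ->].
have [sn gs [t tn st]] := rowP s sQ; have [rE sr] := rP s sn.
by rewrite inE rE; apply/idem_equivP; apply: (eps_equiv_of_corner rE gE sn tn gs sr st).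
Qed.

(* The intertwiners X e : p e -> eps g and Y e : eps g -> p e give a dual family
   between the class of eps g among the p e and the row of g in S. *)
Lemma card_equiv_eps_le (p : S -> A) g : g \in E ->
  (forall e f, e \in E -> f \in E -> e != f -> p e * p f = 0) ->
  (#|[set e in E | idem_equivb (p e) (eps g)]| <=
   #|[set h in E | idem_equivb (eps h) (eps g)]|)%N.
Proof.
move=> gE po; set P := [set e in E | _].
have PE e : e \in P -> e \in E by rewrite inE => /andP[].
have HP e : e \in P -> idem_equiv (p e) (eps g) by rewrite inE => /andP[_ /idem_equivP].
have [X [Y XY]] := idem_equiv_choice (q := fun _ => eps g) HP.
apply: leq_trans (card_corner_row_le gE).
apply: (card_le_dual_family HD (C := fun e s => coef (X e) s)
  (M := fun s e => row_weight g (Y e) s)) => e e' eP e'P.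
have [[gX Xp] _ [_ XYe]] := XY e eP.
rewrite -coef_eps_mul_mul //; have [<-|ne] := eqVneq e e'.
  by rewrite XYe /eps /idm coef_mono (E_neq0 HS gE) eqxx mulVr // (xi_idem_unit HS Hax).
have [_ [pY _] _] := XY e' e'P.
by rewrite -Xp -pY -mulrA (mulrA (p e)) po ?PE // mul0r mulr0 coef0 mul0r.
Qed.

End EquivalenceClasses.

Section IsoNormalization.
Variables (S : finType) (mul : S -> S -> S) (th : S) (E : {set S}).
Hypothesis HS : square_free mul th E.
Variables (D : unitRingType) (alpha beta : S -> D -> D) (xi zeta : S -> S -> D).
Hypotheses (Hax : cocycle mul th alpha xi) (Hbz : cocycle mul th beta zeta).
Hypothesis HD : division_ring D.
Local Notation A := (tw HS Hax).
Local Notation B := (tw HS Hbz).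
Variables (f : B -> A) (fi : A -> B) (fK : cancel f fi) (fiK : cancel fi f).
Hypotheses (fD : {morph f : x y / x + y}) (fM : {morph f : x y / x * y}).

Let f0 : f 0 = 0.
Proof. by apply: (@addrI _ (f 0)); rewrite -fD !addr0. Qed.
Let fiM : {morph fi : x y / x * y}.
Proof. by move=> x y; apply: (can_inj fK); rewrite fM !fiK. Qed.
Let p e := f (eps HS Hbz e).

Let p_orth e e' : e \in E -> e' \in E -> e != e' -> p e * p e' = 0.
Proof. by move=> eE e'E ne; rewrite /p -fM eps_orth // f0. Qed.

Lemma card_iso_class e g : e \in E -> g \in E -> idem_equiv (p e) (eps HS Hax g) ->
  #|[set e' in E | idem_equivb (p e') (eps HS Hax g)]| =
  #|[set g' in E | idem_equivb (p e) (eps HS Hax g')]|.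
Proof.
move=> eE gE r; pose q h := fi (eps HS Hax h).
have qorth h h' : h \in E -> h' \in E -> h != h' -> q h * q h' = 0.
  by move=> hE h'E ne; rewrite /q -fiM eps_orth // -{1}f0 fK.
have le1 := card_equiv_eps_le HD gE p_orth.
have le2 := card_equiv_eps_le HD eE qorth.
have S1 : [set g' in E | idem_equivb (p e) (eps HS Hax g')] =
          [set h in E | idem_equivb (eps HS Hax h) (eps HS Hax g)].
  apply/setP => h; rewrite !inE; apply/andb_id2l => hE; apply/idem_equivP/idem_equivP => H.
    exact: idem_equiv_trans (idem_equiv_sym H) r.
  exact: idem_equiv_trans r (idem_equiv_sym H).
have S2 : [set h in E | idem_equivb (q h) (eps HS Hbz e)] =
          [set g' in E | idem_equivb (p e) (eps HS Hax g')].
  apply/setP => h; rewrite !inE; apply/andb_id2l => hE; apply/idem_equivP/idem_equivP => H.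
    by have := idem_equiv_map fM H; rewrite /q fiK => /idem_equiv_sym.
  by have := idem_equiv_map fiM (idem_equiv_sym H); rewrite /p fK.
have S3 : [set e' in E | idem_equivb (eps HS Hbz e') (eps HS Hbz e)] =
          [set e' in E | idem_equivb (p e') (eps HS Hax g)].
  apply/setP => e'; rewrite !inE; apply/andb_id2l => e'E; apply/idem_equivP/idem_equivP => H.
    exact: idem_equiv_trans (idem_equiv_map fM H) r.
  by have := idem_equiv_map fiM (idem_equiv_trans H (idem_equiv_sym r)); rewrite /p !fK.
rewrite -S1 in le1; rewrite S2 S3 in le2.
by apply/eqP; rewrite eqn_leq le1 le2.
Qed.

Lemma iso_conj_eps : exists pi : S -> S, exists u v : A,
  [/\ (forall e, e \in E -> pi e \in E), {in E &, injective pi}, v * u = 1, u * v = 1 &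
      forall e, e \in E -> u * f (eps HS Hbz e) * v = eps HS Hax (pi e)].
Proof.
have f1 : f 1 = 1.
  have f1z z : f 1 * z = z by rewrite -[z]fiK -fM mul1r.
  by rewrite -[f 1]mulr1 f1z.
have psum : \sum_(e in E) p e = 1 by rewrite -(big_morph f fD f0) sum_eps f1.
pose Rl e g := idem_equivb (p e) (eps HS Hax g).
have Hex e : e \in E -> exists2 g, g \in E & Rl e g.
  move=> eE; have pp : p e * p e = p e by rewrite /p -fM eps_idem.
  have pdiv : corner_div (p e) := corner_div_map fM fK fiK f0 (eps_corner_div HD eE).
  have pn0 : p e != 0.
    by apply: contraNneq (eps_neq0 HS Hbz eE) => pe0; rewrite -[eps _ _ _]fK -/(p e) pe0 -{1}f0 fK.
  by have [g gE /idem_equivP] := exists_eps_equiv HD pp pdiv pn0; exists g.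
have Hbl e e' g g' : Rl e g -> Rl e' g -> Rl e g' -> Rl e' g'.
  move=> /idem_equivP h1 /idem_equivP h2 /idem_equivP h3; apply/idem_equivP.
  exact: idem_equiv_trans h2 (idem_equiv_trans (idem_equiv_sym h1) h3).
have Hcard e g : e \in E -> g \in E -> Rl e g ->
    #|[set e' in E | Rl e' g]| = #|[set g' in E | Rl e g']|.
  by move=> eE gE /idem_equivP; apply: card_iso_class.
have [pi [piP piI]] := exists_matching Hbl Hex Hcard.
have piE e : e \in E -> pi e \in E by case/piP.
have Heq e : e \in E -> idem_equiv (p e) (eps HS Hax (pi e)) by case/piP => _ /idem_equivP.
have [u [v [vu uv hu]]] := conj_orth_idems piE piI Heq p_orth (eps_orth HS Hax) psum (sum_eps HS Hax).
by exists pi, u, v.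
Qed.

End IsoNormalization.

Lemma ring_aut_unit (D : unitRingType) (h : D -> D) u : ring_aut h ->
  u \is a GRing.unit -> h u \is a GRing.unit.
Proof.
case=> h1 _ hM _ uU; apply/unitrP; exists (h u^-1).
by rewrite -!hM mulVr // mulrV.
Qed.

Section NormalizedIso.
Variables (S : finType) (mul : S -> S -> S) (th : S) (E : {set S}).
Hypothesis HS : square_free mul th E.
Variables (D : unitRingType) (alpha beta : S -> D -> D) (xi zeta : S -> S -> D).
Hypotheses (Hax : cocycle mul th alpha xi) (Hbz : cocycle mul th beta zeta).
Hypothesis HD : division_ring D.
Local Notation A := (tw HS Hax).
Local Notation B := (tw HS Hbz).
Variables (g : B -> A) (gi : A -> B) (gK : cancel g gi) (giK : cancel gi g).
Hypotheses (gD : {morph g : x y / x + y}) (gM : {morph g : x y / x * y}).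
Variables (pi : S -> S) (piE : forall e, e \in E -> pi e \in E) (piI : {in E &, injective pi}).
Hypothesis g_eps : forall e, e \in E -> g (eps HS Hbz e) = eps HS Hax (pi e).

Let g0 : g 0 = 0.
Proof. by apply: (@addrI _ (g 0)); rewrite -gD !addr0. Qed.
Let gi0 : gi 0 = 0.
Proof. by rewrite -{1}g0 gK. Qed.
Let giM : {morph gi : x y / x * y}.
Proof. by move=> x y; apply: (can_inj gK); rewrite gM !giK. Qed.

Lemma iso_mono_neq0 c s : s != th -> c != 0 -> g (mono c s) != 0.
Proof.
move=> sn cn; apply: contraNneq cn => gc0.
by apply/eqP; apply: (mono_eq0 sn); rewrite -[mono c s]gK gc0 gi0.
Qed.

Lemma iso_mono_in_corner c s e f : e \in E -> f \in E -> mul e s = s -> mul s f = s ->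
  in_corner mul alpha xi (pi e) (pi f) (g (mono c s)).
Proof.
move=> eE fE es sf.
have ecf : eps HS Hbz e * (mono c s : B) * eps HS Hbz f = mono c s.
  by rewrite !twmulE (idm_mul_mono HS Hbz) // (mono_mul_idm HS Hbz).
by rewrite /in_corner -[in RHS]ecf !gM !g_eps.
Qed.

(* g maps the one-dimensional corner e B f onto the corner (pi e) A (pi f), which is
   spanned by a single element of S; this defines phi, and eta s is the coefficient. *)
Definition phi s := odflt th [pick t | coef (g (mono 1 s)) t != 0].
Definition eta s := coef (g (mono 1 s)) (phi s).

Lemma iso_mono1 s e f : s != th -> e \in E -> f \in E -> mul e s = s -> mul s f = s ->
  [/\ phi s != th, mul (pi e) (phi s) = phi s, mul (phi s) (pi f) = phi s,
      eta s != 0 & g (mono 1 s) = mono (eta s) (phi s)].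
Proof.
move=> sn eE fE es sf; have nz := iso_mono_neq0 sn (oner_neq0 D).
have [z0|[t [tn pt tp gst]]] :=
  in_cornerP HS Hax (piE eE) (piE fE) (iso_mono_in_corner 1 eE fE es sf).
  by rewrite z0 eqxx in nz.
have cn : coef (g (mono 1 s)) t != 0 by apply: contraNneq nz => c0; rewrite gst c0 mono0.
suff phiE : phi s = t by rewrite /eta phiE.
rewrite /phi; case: pickP => [t' /=|H0]; last by move: (H0 t); rewrite cn.
by rewrite {1}gst coef_mono; case: ifP => [/andP[_ /eqP ->]|]; rewrite ?eqxx.
Qed.

Lemma phi_th : phi th = th.
Proof. by rewrite /phi; case: pickP => [t /=|//]; rewrite mono_th g0 coef0 eqxx. Qed.

Lemma phi_idem e : e \in E -> phi e = pi e.
Proof.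
move=> eE; have ee := E_idem HS eE.
have [pn h1 h2 _ _] := iso_mono1 (E_neq0 HS eE) eE eE ee ee.
exact: (diag_corner HS (piE eE) pn h1 h2).
Qed.

Lemma phi_idem_mem e : e \in E -> phi e \in E.
Proof. by move=> eE; rewrite phi_idem // piE. Qed.

(* On the corner e B e ~ D, g induces the ring automorphism mu e of D. *)
Definition mu e d := coef (g (mono (d * (zeta e e)^-1) e)) (phi e) * xi (phi e) (phi e).

Lemma iso_mono_idem e d : e \in E ->
  g (mono (d * (zeta e e)^-1) e) = mono (mu e d * (xi (phi e) (phi e))^-1) (phi e).
Proof.
move=> eE; have ee := E_idem HS eE.
have [pn h1 h2 _ _] := iso_mono1 (E_neq0 HS eE) eE eE ee ee.
rewrite /mu mulrK ?(xi_idem_unit HS Hax) ?phi_idem_mem //.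
exact: (corner_mono HS Hax (piE eE) (piE eE) (iso_mono_in_corner _ eE eE ee ee) pn h1 h2).
Qed.

Lemma iso_mono d s e : s != th -> e \in E -> mul e s = s ->
  g (mono d s) = mono (mu e d * eta s) (phi s).
Proof.
move=> sn eE es; have [_ [f [_ fE _ sf]]] := exists_corner HS s.
have [pn h1 _ _ gs] := iso_mono1 sn eE fE es sf.
have peE := phi_idem_mem eE; have Ua := xi_idem_unit HS Hax peE.
have -> : mono d s = (mono (d * (zeta e e)^-1) e : B) * (mono 1 s : B).
  rewrite twmulE (twmul_mono HS Hbz) es (alpha1 Hbz (E_neq0 HS eE)) mulr1.
  by rewrite (xi_left_idem HS Hbz) // mulrVK // (xi_idem_unit HS Hbz).
rewrite gM iso_mono_idem // gs twmulE (twmul_mono HS Hax) -(phi_idem eE) in h1 *; rewrite h1.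
by rewrite (alpha_idem HS Hax _ peE) (xi_left_idem HS Hax peE pn h1) !mulrA !mulrVK.
Qed.

Lemma mu_aut e : e \in E -> ring_aut (mu e).
Proof.
move=> eE; have ee := E_idem HS eE; have en := E_neq0 HS eE.
have peE := phi_idem_mem eE; have pen := E_neq0 HS peE.
have Ua := xi_idem_unit HS Hax peE; have Ub := xi_idem_unit HS Hbz eE.
split.
- rewrite /mu mul1r (_ : mono _ e = eps HS Hbz e) // g_eps // /eps /idm -phi_idem //.
  by rewrite coef_mono pen eqxx mulVr.
- by move=> x y; rewrite /mu mulrDl monoD gD coefD mulrDl.
- move=> x y.
  have xy : (mono (x * y * (zeta e e)^-1) e : B) =
      (mono (x * (zeta e e)^-1) e : B) * (mono (y * (zeta e e)^-1) e : B).
    rewrite twmulE (twmul_mono HS Hbz) ee (alpha_idem HS Hbz _ eE).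
    by congr mono; rewrite !mulrA !mulrVK.
  have := congr1 g xy; rewrite gM !iso_mono_idem // twmulE (twmul_mono HS Hax).
  rewrite (E_idem HS peE) (alpha_idem HS Hax _ peE) => /(mono_inj pen).
  rewrite !mulrA !mulrVK // => /(congr1 (fun z => z * xi (phi e) (phi e))).
  by rewrite !mulrVK.
- pose mu_inv c := coef (gi (mono (c * (xi (phi e) (phi e))^-1) (phi e))) e * zeta e e.
  exists mu_inv => [d|c].
    by rewrite /mu_inv -iso_mono_idem // gK coef_mono en eqxx /= mulrVK.
  set z : A := mono (c * (xi (phi e) (phi e))^-1) (phi e).
  have ez : in_corner mul alpha xi (pi e) (pi e) (z : A).
    by apply: (mono_in_corner HS Hax _ (piE eE) (piE eE)); rewrite phi_idem // (E_idem HS (piE eE)).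
  have ez' : in_corner mul beta zeta e e (gi z).
    change (eps HS Hbz e * gi z * eps HS Hbz e = gi z).
    have <- : gi (eps HS Hax (pi e)) = eps HS Hbz e by rewrite -g_eps // gK.
    by rewrite -!giM; congr gi; apply: ez.
  rewrite /mu /mu_inv mulrK // -(corner_mono HS Hbz eE eE ez' en ee ee) giK.
  by rewrite /z coef_mono pen eqxx /= mulrVK.
Qed.

Lemma eta_unit s : s != th -> eta s \is a GRing.unit.
Proof.
move=> sn; have [e [f [eE fE es sf]]] := exists_corner HS s.
by have [_ _ _ en _] := iso_mono1 sn eE fE es sf; apply: HD.
Qed.

Lemma iso_mono1_mul s t : s != th -> t != th ->
  g ((mono 1 s : B) * (mono 1 t : B)) =
  mono (eta s * alpha (phi s) (eta t) * xi (phi s) (phi t)) (mul (phi s) (phi t)).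
Proof.
move=> sn tn; have [e [f [eE fE es sf]]] := exists_corner HS s.
have [e' [f' [e'E f'E e't tf']]] := exists_corner HS t.
have [_ _ _ _ gs] := iso_mono1 sn eE fE es sf; have [_ _ _ _ gt] := iso_mono1 tn e'E f'E e't tf'.
by rewrite gM gs gt twmulE (twmul_mono HS Hax).
Qed.

Lemma phi_mul_eta s t e : mul s t != th -> e \in E -> mul e s = s ->
  phi (mul s t) = mul (phi s) (phi t) /\
  mu e (zeta s t) * eta (mul s t) = eta s * alpha (phi s) (eta t) * xi (phi s) (phi t).
Proof.
move=> st eE es; have sn := mul_neq0l HS st; have tn := mul_neq0r HS st.
have est : mul e (mul s t) = mul s t by rewrite -(mulsA HS) es.
have := iso_mono1_mul sn tn.
rewrite twmulE (twmul_mono HS Hbz) (alpha1 Hbz sn) mulr1 mul1r (iso_mono _ st eE est).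
have [e0 [f0 [e0E f0E e0s s0f]]] := exists_corner HS (mul s t).
have [pn _ _ _ _] := iso_mono1 st e0E f0E e0s s0f.
have cn : mu e (zeta s t) * eta (mul s t) != 0.
  apply/negP => /eqP c0; move: (eta_unit st).
  by rewrite -(unitrMr _ (ring_aut_unit (mu_aut eE) (xi_unit Hbz st))) c0 unitr0.
by move/(mono_eq pn cn) => [-> ->].
Qed.

Lemma phi_mul_th s t : s != th -> t != th -> mul s t = th -> mul (phi s) (phi t) = th.
Proof.
move=> sn tn st; have := iso_mono1_mul sn tn.
rewrite twmulE (twmul_mono HS Hbz) st mono_th g0 => gst.
have [e [f [eE fE es sf]]] := exists_corner HS s.
have [pn _ _ _ _] := iso_mono1 sn eE fE es sf.
apply/eqP; apply: contraT => nz.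
have : eta s * alpha (phi s) (eta t) * xi (phi s) (phi t) \is a GRing.unit.
  rewrite unitrMl ?(xi_unit Hax) // unitrMr ?eta_unit //.
  exact: (ring_aut_unit (alpha_aut Hax pn) (eta_unit tn)).
by rewrite (mono_eq0 nz (esym gst)) unitr0.
Qed.

Lemma phi_mul s t : phi (mul s t) = mul (phi s) (phi t).
Proof.
have [->|sn] := eqVneq s th; first by rewrite (mul0s HS) phi_th (mul0s HS).
have [->|tn] := eqVneq t th; first by rewrite (muls0 HS) phi_th (muls0 HS).
have [st|st] := eqVneq (mul s t) th; first by rewrite st phi_th (phi_mul_th sn tn st).
have [e [f [eE fE es sf]]] := exists_corner HS s.
by case: (phi_mul_eta st eE es).
Qed.

Lemma phi_inj : injective phi.
Proof.
have phin s : s != th -> phi s != th.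
  by move=> sn; have [e [f [eE fE es sf]]] := exists_corner HS s; case: (iso_mono1 sn eE fE es sf).
move=> s s' ss'.
have [s0|sn] := eqVneq s th.
  by apply/eqP; apply: contraT; rewrite s0 eq_sym => /phin; rewrite -ss' s0 phi_th eqxx.
have [s'0|s'n] := eqVneq s' th; first by move: (phin s sn); rewrite ss' s'0 phi_th eqxx.
have [e [f [eE fE es sf]]] := exists_corner HS s.
have [e' [f' [e'E f'E es' sf']]] := exists_corner HS s'.
have [pn h1 h2 _ _] := iso_mono1 sn eE fE es sf.
have [_ h1' h2' _ _] := iso_mono1 s'n e'E f'E es' sf'; rewrite -ss' in h1' h2'.
have ee : e = e' by apply: piI => //; apply: (left_idem_uniq HS (piE eE) (piE e'E) pn).
have ff : f = f' by apply: piI => //; apply: (right_idem_uniq HS (piE fE) (piE f'E) pn).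
by rewrite -ee -ff in es' sf'; apply: (corner_uniq HS eE fE sn s'n es sf es' sf').
Qed.

Lemma phi_aut : semigroup_aut mul phi.
Proof. by split; [apply: injF_bij phi_inj | apply: phi_mul]. Qed.

(* Compare the images of (1 s) * (x f) = (beta_s(x) zeta(s,f)) s; the case x = 1 removes zeta. *)
Lemma mu_beta s e f x : s != th -> e \in E -> f \in E -> mul e s = s -> mul s f = s ->
  mu e (beta s x) = eta s * alpha (phi s) (mu f x) * (eta s)^-1.
Proof.
move=> sn eE fE es sf; have fn := E_neq0 HS fE; have ff := E_idem HS fE.
have [pn _ spf _ gs] := iso_mono1 sn eE fE es sf.
have img y : eta s * alpha (phi s) (mu f y * eta f) * xi (phi s) (pi f) =
             mu e (beta s y * zeta s f) * eta s.
  have gsy : g ((mono 1 s : B) * (mono y f : B)) = g (mono (beta s y * zeta s f) s : B).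
    by rewrite twmulE (twmul_mono HS Hbz) sf mul1r.
  rewrite gM gs (iso_mono y fn fE ff) (iso_mono _ sn eE es) twmulE in gsy.
  by rewrite (twmul_mono HS Hax) (phi_idem fE) spf in gsy; apply: (mono_inj pn gsy).
have [mu1 _ muM _] := mu_aut eE; have [muf1 _ _ _] := mu_aut fE.
have img1 := img 1; rewrite (alpha1 Hbz sn) mul1r muf1 mul1r in img1.
have KU : alpha (phi s) (eta f) * xi (phi s) (pi f) \is a GRing.unit.
  rewrite unitrMl ?(xi_unit Hax) ?spf //.
  exact: (ring_aut_unit (alpha_aut Hax pn) (eta_unit fn)).
have : (eta s * alpha (phi s) (mu f x)) * (alpha (phi s) (eta f) * xi (phi s) (pi f)) =
       (mu e (beta s x) * eta s) * (alpha (phi s) (eta f) * xi (phi s) (pi f)).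
  transitivity (mu e (beta s x * zeta s f) * eta s).
    by rewrite -img (alphaM Hax _ _ pn) !mulrA.
  by rewrite muM -mulrA -img1 !mulrA.
by move/(mulIr KU) => ->; rewrite mulrK ?eta_unit.
Qed.

Lemma phi_coh : cohomologous mul th E (fun s => alpha (phi s)) (fun s t => xi (phi s) (phi t))
  beta zeta.
Proof.
exists mu, eta; split.
- exact: mu_aut.
- exact: eta_unit.
- move=> s e f sn eE fE /(corner_split HS eE fE) [es sf] x.
  exact: mu_beta.
- move=> s t e f st eE fE /(corner_split HS eE fE) [es _].
  by have [_ <-] := phi_mul_eta st eE es; rewrite mulrK ?eta_unit.
Qed.

End NormalizedIso.

Lemma twalg_iso_coh (S : finType) (mul : S -> S -> S) (th : S) (E : {set S})
  (HS : square_free mul th E) (D : unitRingType) (HD : division_ring D)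
  (alpha beta : S -> D -> D) (xi zeta : S -> S -> D)
  (Hax : cocycle mul th alpha xi) (Hbz : cocycle mul th beta zeta) :
  twalg_iso mul th beta zeta alpha xi ->
  exists phi : S -> S, semigroup_aut mul phi /\
    cohomologous mul th E (fun s => alpha (phi s)) (fun s t => xi (phi s) (phi t)) beta zeta.
Proof.
case=> f [[fi fK fiK] fD fM].
pose F : tw HS Hbz -> tw HS Hax := f; pose Fi : tw HS Hax -> tw HS Hbz := fi.
have [pi [u [v [piE piI vu uv uFv]]]] := iso_conj_eps HD (f := F) fK fiK fD fM.
pose g z := u * F z * v; pose gi z := Fi (v * z * u).
have gK : cancel g gi.
  by move=> z; rewrite /g /gi !mulrA vu mul1r -mulrA vu mulr1 /Fi /F fK.
have giK : cancel gi g.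
  by move=> z; rewrite /g /gi /Fi /F fiK !mulrA uv mul1r -mulrA uv mulr1.
have gD : {morph g : x y / x + y} by move=> x y; rewrite /g /F fD mulrDr mulrDl.
have gM : {morph g : x y / x * y}.
  by move=> x y; rewrite /g /F [f _]fM -!mulrA (mulrA v) vu mul1r.
exists (phi g); split; first exact: (phi_aut HD gK giK gD gM piE piI uFv).
exact: (phi_coh HD gK giK gD gM piE uFv).
Qed.

(** * From thin cohomology to ring isomorphisms *)

Section CohomologousIso.
Variables (S : finType) (mul : S -> S -> S) (th : S) (E : {set S}).
Hypothesis HS : square_free mul th E.
Variables (D : unitRingType) (alpha beta : S -> D -> D) (xi zeta : S -> S -> D).
Hypotheses (Hax : cocycle mul th alpha xi) (Hbz : cocycle mul th beta zeta).
Variables (phi : S -> S) (Hphi : semigroup_aut mul phi) (mu : S -> D -> D) (eta : S -> D).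
Hypothesis Hact : acts_to mul th E mu eta (fun s => alpha (phi s))
  (fun s t => xi (phi s) (phi t)) beta zeta.
Local Notation tA := (@twmul S mul th D alpha xi).
Local Notation tB := (@twmul S mul th D beta zeta).

Let phiM s t : phi (mul s t) = mul (phi s) (phi t). Proof. by case: Hphi. Qed.
Let phi_bij : bijective phi. Proof. by case: Hphi. Qed.

Lemma aut_th : phi th = th.
Proof.
have [phi_inv _ phiK] := phi_bij.
have phi_th t : mul (phi th) t = phi th by rewrite -[t]phiK -phiM (mul0s HS).
by rewrite -(phi_th th) (muls0 HS).
Qed.

Lemma aut_neq0 s : s != th -> phi s != th.
Proof. by apply: contraNneq => s0; apply/eqP/(bij_inj phi_bij); rewrite s0 aut_th. Qed.

Let mu_aut e : e \in E -> ring_aut (mu e). Proof. by case: Hact => H _ _ _; apply: H. Qed.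
Let mu0 e : e \in E -> mu e 0 = 0.
Proof.
by move=> eE; have [_ muD _ _] := mu_aut eE; apply: (@addrI _ (mu e 0)); rewrite -muD !addr0.
Qed.
Let eta_unit s : s != th -> eta s \is a GRing.unit. Proof. by case: Hact => _ H _ _; apply: H. Qed.

Definition coh_map (x : twalg th D) : twalg th D :=
  \sum_(s : S) \sum_(e in E | mul e s == s) mono (mu e (coef x s) * eta s) (phi s).

Lemma sum_left_idem (V : zmodType) (G : S -> V) s e : s != th -> e \in E -> mul e s = s ->
  \sum_(e' in E | mul e' s == s) G e' = G e.
Proof.
move=> sn eE es; rewrite (bigD1 e) ?eE ?es ?eqxx //= big1 ?addr0 //.
move=> e' /andP[/andP[e'E /eqP e's] ne]; case/eqP: ne.
exact: (left_idem_uniq HS e'E eE sn e's es).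
Qed.

Lemma coef_coh_map x s e : s != th -> e \in E -> mul e s = s ->
  coef (coh_map x) (phi s) = mu e (coef x s) * eta s.
Proof.
move=> sn eE es; rewrite /coh_map coef_sum (bigD1 s) //= [X in _ + X]big1 ?addr0.
  rewrite coef_sum (sum_left_idem (fun e' => coef (mono _ (phi s)) (phi s)) sn eE es).
  by rewrite coef_mono aut_neq0 ?eqxx.
move=> s' ns'; rewrite coef_sum big1 // => e' _; rewrite coef_mono.
by case: ifP => // /andP[_ /eqP /(bij_inj phi_bij) s's]; rewrite s's eqxx in ns'.
Qed.

Lemma coh_map_mono c s e : s != th -> e \in E -> mul e s = s ->
  coh_map (mono c s) = mono (mu e c * eta s) (phi s).
Proof.
move=> sn eE es; rewrite /coh_map (bigD1 s) //= [X in _ + X]big1 ?addr0.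
  by rewrite (sum_left_idem (fun e' => mono (mu e' _ * eta s) (phi s)) sn eE es) coef_mono sn eqxx.
move=> s' ns'; apply: big1 => e' /andP[e'E _].
by rewrite coef_mono (negbTE ns') andbF mu0 // mul0r mono0.
Qed.

Lemma coh_map0 : coh_map 0 = 0.
Proof.
rewrite /coh_map big1 // => s _; apply: big1 => e /andP[eE _].
by rewrite coef0 mu0 // mul0r mono0.
Qed.

Lemma coh_mapD : {morph coh_map : x y / x + y}.
Proof.
move=> x y; rewrite /coh_map -big_split; apply: eq_bigr => s _.
rewrite -big_split; apply: eq_bigr => e /andP[eE _].
by have [_ muD _ _] := mu_aut eE; rewrite coefD muD mulrDl monoD.
Qed.

Lemma coh_map_sum (I : Type) (r : seq I) (P : pred I) (G : I -> twalg th D) :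
  coh_map (\sum_(i <- r | P i) G i) = \sum_(i <- r | P i) coh_map (G i).
Proof. exact: (big_morph coh_map coh_mapD coh_map0). Qed.

Lemma coh_map_mono_mul c d s t :
  coh_map (tB (mono c s) (mono d t)) = tA (coh_map (mono c s)) (coh_map (mono d t)).
Proof.
have [->|sn] := eqVneq s th; first by rewrite mono_th coh_map0 (twmul0l HS) coh_map0 (twmul0l HS).
have [->|tn] := eqVneq t th.
  by rewrite mono_th coh_map0 (twmul0r HS Hbz) coh_map0 (twmul0r HS Hax).
have [e [f [eE fE es sf]]] := exists_corner HS s.
have [e' [_ [e'E _ e't _]]] := exists_corner HS t.
rewrite (coh_map_mono _ sn eE es) (coh_map_mono _ tn e'E e't).
rewrite (twmul_mono HS Hbz) (twmul_mono HS Hax) -phiM.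
have [->|st] := eqVneq (mul s t) th; first by rewrite aut_th !mono_th coh_map0.
have fe' : f = e'.
  by apply/eqP; apply: contraNT st => ne; rewrite (mul_corner_orth HS e'E fE ne sf e't).
have est : mul e (mul s t) = mul s t by rewrite -(mulsA HS) es.
have esf : mul (mul e s) f = s by rewrite es sf.
rewrite (coh_map_mono _ st eE est); congr mono.
have [_ _ muM _] := mu_aut eE; have [_ _ act_beta act_zeta] := Hact.
rewrite !muM (act_beta _ _ _ sn eE fE esf) (act_zeta _ _ _ _ st eE fE esf) fe'.
by rewrite (alphaM Hax _ _ (aut_neq0 sn)) !mulrA !mulrVK ?eta_unit.
Qed.

Lemma coh_mapM x y : coh_map (tB x y) = tA (coh_map x) (coh_map y).
Proof.
rewrite (coef_expand x) (coef_expand y) (twmul_suml HS beta zeta) !coh_map_sum.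
rewrite (twmul_suml HS alpha xi); apply: eq_bigr => s _.
rewrite (twmul_sumr HS Hbz) coh_map_sum (twmul_sumr HS Hax).
by apply: eq_bigr => t _; apply: coh_map_mono_mul.
Qed.

Lemma coh_map_inj : injective coh_map.
Proof.
move=> x y xy; apply: eq_coef => s sn.
have [e [_ [eE _ es _]]] := exists_corner HS s.
have := congr1 (fun z => coef z (phi s)) xy; rewrite /= !(coef_coh_map _ sn eE es).
by move/(mulIr (eta_unit sn)); have [_ _ _ /bij_inj] := mu_aut eE; apply.
Qed.

Lemma coh_map_surj y : exists x, coh_map x = y.
Proof.
rewrite (coef_expand y); apply: (big_ind (fun z => exists x, coh_map x = z)).
- by exists 0; rewrite coh_map0.
- by move=> a b [x1 <-] [x2 <-]; exists (x1 + x2); rewrite coh_mapD.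
move=> t _; have [->|tn] := eqVneq t th; first by exists 0; rewrite mono_th coh_map0.
have [phi_inv phiK phi_invK] := phi_bij.
have sn : phi_inv t != th by apply: contraNneq tn => s0; rewrite -(phi_invK t) s0 aut_th.
have [e [_ [eE _ es _]]] := exists_corner HS (phi_inv t).
have [_ _ _ [mu_inv muK mu_invK]] := mu_aut eE.
exists (mono (mu_inv (coef y t * (eta (phi_inv t))^-1)) (phi_inv t)).
by rewrite (coh_map_mono _ sn eE es) mu_invK mulrVK ?phi_invK ?eta_unit.
Qed.

Lemma coh_twalg_iso : twalg_iso mul th beta zeta alpha xi.
Proof.
have surj y : exists x, coh_map x == y by have [x <-] := coh_map_surj y; exists x.
exists coh_map; split; [|exact: coh_mapD|exact: coh_mapM].
exists (fun y => xchoose (surj y)) => [x|y]; last exact/eqP/(xchooseP (surj y)).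
by apply: coh_map_inj; apply/eqP/(xchooseP (surj _)).
Qed.

End CohomologousIso.

Theorem mainTheorem3 (S : finType) (mul : S -> S -> S) (th : S) (E : {set S})
  (HS : square_free mul th E)
  (D : unitRingType) (HD : division_ring D)
  (alpha beta : S -> D -> D) (xi zeta : S -> S -> D)
  (Hax : cocycle mul th alpha xi) (Hbz : cocycle mul th beta zeta) :
  twalg_iso mul th beta zeta alpha xi <->
  exists phi : S -> S, semigroup_aut mul phi /\
    cohomologous mul th E (fun s => alpha (phi s)) (fun s t => xi (phi s) (phi t))
      beta zeta.
Proof.
split; first exact: (twalg_iso_coh HS HD Hax Hbz).
by case=> phi [Hphi [mu [eta Hact]]]; apply: (coh_twalg_iso HS Hax Hbz Hphi Hact).
Qed.
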